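(* Let $\bm M\in\mathcal{B}(N,r)$. Then there exist an integer $r'$ with $r\le r'\le rN$ and $\bm U\in\mathbb{R}^{r'\times rN}$ with $\bm M = \bm U^\top\bm U$ of the block form $$\bm U = \begin{bmatrix} \bm S_1 & \bm S_2 & \cdots & \bm S_N \\ \bm R_1 & \bm R_2 & \cdots & \bm R_N\end{bmatrix},$$ where $\bm S_i\in\mathbb{R}^{r\times r}$ are symmetric, $\bm S_1 = \bm I_r$, $\bm R_i\in\mathbb{R}^{(r'-r)\times r}$, $\bm R_1 = \bm 0$, and for all $i,j\in[N]$, $$\bm S_i^2 + \bm R_i^\top\bm R_i = \bm I_r,\qquad \bm S_i\bm S_j - \bm S_j\bm S_i + \bm R_i^\top\bm R_j - \bm R_j^\top\bm R_i = \bm 0.$$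
   Context: A matrix $\bm M \in \mathbb{R}^{rN\times rN}$ is viewed as an $N\times N$ array of $r\times r$ blocks, $\bm M_{[ij]}$ denoting block $(i,j)$. $\mathcal{B}(N,r)$ is the set of symmetric $\bm M \in \mathbb{R}^{rN\times rN}$ with $\bm M \succeq 0$, $\bm M_{[ii]} = \bm I_r$ for all $i$, and $\bm M_{[ij]} = \bm M_{[ij]}^\top$ for all $i,j$. *)

(* real numbers are modelled by an arbitrary real closed field. *)
From HB Require Import structures.
From mathcomp Require Import all_boot all_order all_algebra.
Set Implicit Arguments. Unset Strict Implicit. Unset Printing Implicit Defensive.
Import Order.TTheory GRing.Theory Num.Theory.
Local Open Scope ring_scope.

(* A (N*r) x (N*r) matrix viewed as an N x N array of r x r blocks;
   row index (i, a) with i : 'I_N, a : 'I_r is mxvec_index i a, i.e. i*r + a. *)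
Definition blk (R : Type) (N r : nat) (M : 'M[R]_(N * r)) (i j : 'I_N) : 'M[R]_r :=
  \matrix_(a < r, b < r) M (mxvec_index i a) (mxvec_index j b).

Definition colblk (R : Type) (p N r : nat) (U : 'M[R]_(p, N * r)) (i : 'I_N) : 'M[R]_(p, r) :=
  \matrix_(q < p, b < r) U q (mxvec_index i b).

Definition psd (R : numDomainType) (n : nat) (M : 'M[R]_n) : Prop :=
  M^T = M /\ forall x : 'cV[R]_n, 0 <= (x^T *m M *m x) 0 0.

Definition inB (R : numDomainType) (N r : nat) (M : 'M[R]_(N * r)) : Prop :=
  [/\ M^T = M, psd M,
      (forall i : 'I_N, blk M i i = 1%:M) &
      (forall i j : 'I_N, (blk M i j)^T = blk M i j)].

From HB Require Import structures.
From mathcomp Require Import all_boot all_order all_algebra.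
From mathcomp Require Import ring lra.
Import Order.TTheory GRing.Theory Num.Theory.
Local Open Scope ring_scope.

(* Since the first diagonal block of M is the identity, the Schur complement
   D - C^T C of that block is positive semidefinite, so it factors as E^T E and
   M = U^T U with U = [1 C; 0 E].  Reading U by column blocks gives U's blocks
   [S_i; R_i] with S_1 = 1, R_1 = 0; then S_i = S_1^T S_i + R_1^T R_i = M_1i is
   symmetric, S_i^T S_j + R_i^T R_j = M_ij, and the symmetry M_ij = M_ji yields
   the commutation relations. *)

Lemma delta_quad_form {R : comPzRingType} {n : nat} (A : 'M[R]_n) p q :
  (delta_mx p 0 : 'cV_n)^T *m A *m delta_mx q 0 = (A p q)%:M.
Proof. by rewrite [LHS]mx11_scalar trmx_delta -rowE -colE !mxE. Qed.

Lemma psd_diag_ge0 {R : numDomainType} {n : nat} {A : 'M[R]_n} {p : 'I_n} :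
  psd A -> 0 <= A p p.
Proof.
move=> [_ hq]; have := hq (delta_mx p 0).
by rewrite delta_quad_form mxE eqxx mulr1n.
Qed.

Lemma psd_diag_eq0 {R : realFieldType} {n : nat} {A : 'M[R]_n} {p q : 'I_n} :
  psd A -> A p p = 0 -> A p q = 0.
Proof.
move=> [hT hq] hpp.
have hqp : A q p = A p q by rewrite -[in RHS]hT mxE.
have quad t : 0 <= t * A p q + t * A p q + A q q.
  have := hq (t *: delta_mx p 0 + delta_mx q 0).
  rewrite [_^T]linearD /= [(_ *: _)^T]linearZ /= !mulmxDl !mulmxDr.
  rewrite -!scalemxAl -!scalemxAr !delta_quad_form hpp hqp !mxE !eqxx !mulr1n.
  by rewrite !mulr0 add0r addrA.
apply/eqP/negPn/negP => Apq_neq0.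
have := quad (- (A q q + 1) / (2 * A p q)).
have -> : - (A q q + 1) / (2 * A p q) * A p q = - (A q q + 1) / 2.
  by field; rewrite Apq_neq0.
lra.
Qed.

Lemma psd_schur_complement {R : numDomainType} {m n : nat} {A : 'M[R]_(m + n)}
    {B : 'M[R]_(m, n)} :
  psd A -> ulsubmx A *m B = ursubmx A ->
  psd (drsubmx A - (ursubmx A)^T *m B).
Proof.
move=> [AT Aq] hB.
set a := ulsubmx A; set c := ursubmx A; set D := drsubmx A.
move: hB; rewrite -/a -/c => hB.
have aT : a^T = a by rewrite /a trmx_ulsub AT.
have DT : D^T = D by rewrite /D trmx_drsub AT.
have dlE : dlsubmx A = c^T by rewrite /c trmx_ursub AT.
have cB : c^T *m B = B^T *m c by rewrite -hB trmx_mul aT mulmxA.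
split; first by rewrite linearB /= trmx_mul trmxK DT cB.
(* evaluate the form of A at the vector [-Bx; x] *)
move=> x; have := Aq (col_mx (- (B *m x)) x).
rewrite -[A]submxK -/a -/c -/D dlE tr_col_mx mul_row_block mul_row_col.
have Bxa : (B *m x)^T *m a = x^T *m c^T by rewrite -hB !trmx_mul aT mulmxA.
rewrite [(- _)^T]linearN /= mulNmx Bxa addNr mul0mx add0r.
suff -> : x^T *m (D - c^T *m B) *m x = (- (B *m x)^T *m c + x^T *m D) *m x by [].
by rewrite cB trmx_mul mulmxBr mulmxBl mulmxDl !mulNmx !mulmxA addrC.
Qed.

Lemma psd_gram {R : rcfType} {n : nat} {A : 'M[R]_n} :
  psd A -> exists E : 'M[R]_n, A = E^T *m E.
Proof.
elim: n A => [|n IH] A hA; first by exists 0; apply/matrixP => -[].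
move: A hA; change (forall A : 'M[R]_(1 + n), psd A ->
  exists E : 'M[R]_(1 + n), A = E^T *m E) => A hA.
set a := ulsubmx A 0 0; set c := ursubmx A; set D := drsubmx A.
have aE : ulsubmx A = a%:M by rewrite [LHS]mx11_scalar.
have a_ge0 : 0 <= a by rewrite /a !mxE; apply: psd_diag_ge0.
have [B aB] : exists B : 'M[R]_(1, n), a *: B = c.
  move: a_ge0; rewrite le0r => /orP[/eqP a0|a_gt0].
    exists 0; rewrite scaler0; apply/matrixP => i j.
    rewrite (ord1 i) /c !mxE; symmetry; apply: psd_diag_eq0 hA _.
    by move: a0; rewrite /a !mxE.
  by exists (a^-1 *: c); rewrite scalerA mulfV ?gt_eqF // scale1r.
have hS : ulsubmx A *m B = c by rewrite aE mul_scalar_mx.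
have [E hE] := IH _ (psd_schur_complement hA hS).
have dlE : dlsubmx A = c^T by rewrite /c trmx_ursub hA.1.
have sqrt_a : Num.sqrt a * Num.sqrt a = a by rewrite -expr2 sqr_sqrtr.
exists (block_mx (Num.sqrt a)%:M (Num.sqrt a *: B) 0 E).
rewrite tr_block_mx mulmx_block -{1}[A]submxK.
rewrite !trmx0 !mul0mx !mulmx0 !addr0 tr_scalar_mx.
congr block_mx.
- by rewrite -scalar_mxM sqrt_a aE.
- by rewrite mul_scalar_mx scalerA sqrt_a.
- by rewrite dlE mul_mx_scalar linearZ /= scalerA sqrt_a -aB linearZ.
- rewrite -/D -(subrK (c^T *m B) D) hE addrC; congr (_ + _).
  by rewrite -aB !linearZ /= -!scalemxAl scalerA sqrt_a.
Qed.

Lemma psd_unit_corner_gram {R : rcfType} {m n : nat} {A : 'M[R]_(m + n)} :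
  psd A -> ulsubmx A = 1%:M ->
  exists E : 'M[R]_n,
    A = (block_mx 1%:M (ursubmx A) 0 E)^T *m block_mx 1%:M (ursubmx A) 0 E.
Proof.
move=> hA Aul.
have hS : ulsubmx A *m ursubmx A = ursubmx A by rewrite Aul mul1mx.
have [E hE] := psd_gram (psd_schur_complement hA hS).
exists E; rewrite tr_block_mx mulmx_block -{1}[A]submxK.
rewrite !trmx0 !mul0mx !mulmx0 !addr0 trmx1 !mul1mx mulmx1.
by rewrite Aul -hE trmx_ursub hA.1 addrC subrK.
Qed.

Lemma mxvec_index_ord0 {n r : nat} (b : 'I_r) :
  mxvec_index (ord0 : 'I_n.+1) b = lshift (n * r) b.
Proof.
apply: val_inj.
rewrite /mxvec_index /= /enum_rank enum_rank_in.unlock val_insubd.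
have -> : enum {: 'I_n.+1 * 'I_r} = prod_enum 'I_n.+1 'I_r.
  by rewrite enumT unlock.
have -> : index (ord0, b) (prod_enum 'I_n.+1 'I_r) = b.
  rewrite /prod_enum enum_ordSl /= index_cat map_f ?mem_enum //.
  by rewrite index_map ?index_enum_ord // => x y [].
by rewrite ifT // card_prod !card_ord (leq_trans (ltn_ord b)) // leq_pmull.
Qed.

Lemma blk00_ulsubmx {R : Type} {n r : nat} (M : 'M[R]_(n.+1 * r)) :
  blk M ord0 ord0 = ulsubmx (M : 'M_(r + n * r)).
Proof. by apply/matrixP => a b; rewrite !mxE !mxvec_index_ord0. Qed.

Lemma colblk_block_unit {R : pzRingType} {n r k : nat} (C : 'M[R]_(r, n * r))
    (E : 'M[R]_(k, n * r)) :
  colblk (block_mx 1%:M C 0 E : 'M_(r + k, n.+1 * r)) ord0 = col_mx 1%:M 0.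
Proof.
apply/matrixP => q b; rewrite mxE mxvec_index_ord0 -[q]splitK.
by case: (split q) => q' /=;
  rewrite ?block_mxEul ?block_mxEdl ?col_mxEu ?col_mxEd.
Qed.

Lemma blk_gram {R : comPzRingType} {p N r : nat} (U : 'M[R]_(p, N * r))
    (i j : 'I_N) :
  blk (U^T *m U) i j = (colblk U i)^T *m colblk U j.
Proof.
by apply/matrixP => a b; rewrite !mxE; apply: eq_bigr => q _; rewrite !mxE.
Qed.

Lemma blk_trmx {R : Type} {N r : nat} (M : 'M[R]_(N * r)) (i j : 'I_N) :
  blk M^T i j = (blk M j i)^T.
Proof. by apply/matrixP => a b; rewrite !mxE. Qed.

Lemma gram_sym_commutator {R : comPzRingType} {r k : nat} (S T : 'M[R]_r)
    (X Y : 'M[R]_(k, r)) :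
  S^T = S -> T^T = T ->
  S^T *m T + X^T *m Y = T^T *m S + Y^T *m X ->
  S *m T - T *m S + X^T *m Y - Y^T *m X = 0.
Proof.
move=> ST TT; rewrite ST TT => e.
by rewrite [_ - _ + _]addrAC e -addrA -opprD subrr.
Qed.

Theorem proposition8 (R : rcfType) (N r : nat) (hN : (0 < N)%N)
    (M : 'M[R]_(N * r)) (hM : inB M) :
  exists (k : nat) (U : 'M[R]_(r + k, N * r)) (S : 'I_N -> 'M[R]_r)
         (Rm : 'I_N -> 'M[R]_(k, r)),
    (r <= r + k <= N * r)%N /\
        M = U^T *m U /\
        (forall i : 'I_N, colblk U i = col_mx (S i) (Rm i)) /\
        (forall i : 'I_N, (S i)^T = S i) /\
        (forall i : 'I_N, nat_of_ord i = 0%N -> S i = 1%:M /\ Rm i = 0) /\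
        (forall i : 'I_N, S i *m S i + (Rm i)^T *m Rm i = 1%:M) /\
        (forall i j : 'I_N,
            S i *m S j - S j *m S i + (Rm i)^T *m Rm j - (Rm j)^T *m Rm i = 0).
Proof.
case: N hN M hM => // n _ M [MT Mpsd Mdiag Msym].
have [E ME] := psd_unit_corner_gram Mpsd
  (etrans (esym (blk00_ulsubmx M)) (Mdiag ord0)).
pose U : 'M[R]_(r + n * r, n.+1 * r) := block_mx 1%:M (ursubmx M) 0 E.
pose S i := usubmx (colblk U i); pose Rm i := dsubmx (colblk U i).
have colE i : colblk U i = col_mx (S i) (Rm i) by rewrite vsubmxK.
have gramE i j : (S i)^T *m S j + (Rm i)^T *m Rm j = blk M i j.
  by rewrite [M]ME blk_gram !colE tr_col_mx mul_row_col.
have [S0 R0] : S ord0 = 1%:M /\ Rm ord0 = 0.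
  by rewrite /S /Rm colblk_block_unit col_mxKu col_mxKd.
have S_sym i : (S i)^T = S i.
  have := gramE ord0 i; rewrite S0 R0 trmx1 mul1mx trmx0 mul0mx addr0 => ->.
  exact: Msym.
exists (n * r)%N, U, S, Rm.
split; first by rewrite leq_addr mulSn leqnn.
do 3 (split; first by []).
split; first by move=> i /eqP i0; rewrite (_ : i = ord0) //; apply/val_inj/eqP.
split; first by move=> i; rewrite -{1}S_sym gramE Mdiag.
move=> i j; apply: gram_sym_commutator (S_sym i) (S_sym j) _; rewrite !gramE.
by rewrite -[RHS]Msym -blk_trmx MT.
Qed.
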